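(* For every integer $r_3\geq 0$ there exists an integer $r_2^*\geq 0$ such that (1) for every integer $r_2\geq r_2^*$ there exists a graph with parameters $(r_2,r_3)$, and (2) for every integer $0\le r_2<r_2^*$ there exists no graph with parameters $(r_2,r_3)$.
   Context: All graphs are finite, simple and undirected. The $K_3$-degree of a vertex $v$ is the number of triangles containing $v$. A graph $G$ has parameters $(r_2,r_3)$ if every vertex has degree $r_2$ and every vertex has $K_3$-degree $r_3$. *)

From mathcomp Require Import all_boot.
Set Implicit Arguments. Unset Strict Implicit. Unset Printing Implicit Defensive.

Definition simple_graph (T : finType) (e : rel T) : Prop :=
  symmetric e /\ irreflexive e.

Definition deg (T : finType) (e : rel T) (v : T) : nat := #|[set w | e v w]|.

(* K3-degree of v: number of triangles containing v, i.e. number of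
   unordered pairs {u,w} of neighbours of v that are adjacent. *)
Definition k3deg (T : finType) (e : rel T) (v : T) : nat :=
  #|[set S : {set T} | [&& #|S| == 2, S \subset [set w | e v w]
        & [forall u in S, forall w in S, (u != w) ==> e u w]]]|.

Definition has_params (T : finType) (e : rel T) (r2 r3 : nat) : Prop :=
  forall v : T, deg e v = r2 /\ k3deg e v = r3.

(* there exists a (nonempty) finite simple graph with parameters (r2, r3);
   vertex set taken to be 'I_n, which covers all finite graphs up to iso. *)
Definition exists_graph (r2 r3 : nat) : Prop :=
  exists (n : nat) (e : rel 'I_n),
    0 < n /\ simple_graph e /\ has_params e r2 r3.

(* The Cartesian product G □ H adds both degrees and K3-degrees: every triangle
   of G □ H lies inside a G-fibre or an H-fibre, since a neighbour of (g, h)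
   in the G-fibre is never adjacent to one in the H-fibre. Multiplying by K2
   raises r2 by one and keeps r3, so the admissible r2 form an up-set; the
   product of K1 with r3 copies of K3 shows it contains 2 r3. Its least
   element is r2*. *)

From Stdlib Require Import Classical Wf_nat.
From mathcomp Require Import all_boot.
Set Implicit Arguments. Unset Strict Implicit. Unset Printing Implicit Defensive.

Definition triangles_at (T : finType) (e : rel T) (v : T) : {set {set T}} :=
  [set S : {set T} | [&& #|S| == 2, S \subset [set w | e v w]
        & [forall u in S, forall w in S, (u != w) ==> e u w]]].

Lemma k3degE (T : finType) (e : rel T) (v : T) : k3deg e v = #|triangles_at e v|.
Proof. by []. Qed.

Section InducedEmbedding.
Variables (T1 T2 : finType) (e1 : rel T1) (e2 : rel T2) (f : T1 -> T2).
Hypothesis f_inj : injective f.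
Hypothesis f_induced : forall x y, e2 (f x) (f y) = e1 x y.

Lemma imset_triangles_at v (S : {set T1}) :
  (f @: S \in triangles_at e2 (f v)) = (S \in triangles_at e1 v).
Proof.
rewrite !inE (card_imset _ f_inj); congr [&& _, _ & _].
- apply/subsetP/subsetP => sub x.
  + by move=> xS; have := sub _ (imset_f f xS); rewrite !inE f_induced.
  + by case/imsetP => y yS ->; have := sub y yS; rewrite !inE f_induced.
- apply/forall_inP/forall_inP => adj u uS; apply/forall_inP => w wS.
  + have := forall_inP (adj _ (imset_f f uS)) _ (imset_f f wS).
    by rewrite (inj_eq f_inj) f_induced.
  + case/imsetP: uS => {}u uS ->; case/imsetP: wS => {}w wS ->.
    by rewrite (inj_eq f_inj) f_induced; exact: (forall_inP (adj u uS)).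
Qed.

Lemma imset_preimset (S : {set T2}) : S \subset f @: setT -> f @: (f @^-1: S) = S.
Proof.
move/subsetP=> Sf; apply/setP => x; apply/imsetP/idP => [[y] | xS].
  by rewrite inE => yS ->.
have /imsetP [y _ def_x] := Sf x xS.
by exists y; rewrite // inE -def_x.
Qed.

Lemma card_triangles_at_range v :
  #|[set S in triangles_at e2 (f v) | S \subset f @: setT]| = k3deg e1 v.
Proof.
rewrite k3degE -(card_imset _ (imset_inj f_inj)); apply: eq_card => S.
rewrite inE; apply/andP/imsetP => [[triS Sf] | [S1 triS1 ->]].
  by exists (f @^-1: S); rewrite -?imset_triangles_at imset_preimset.
split; first by rewrite imset_triangles_at.
by apply: imsetS; apply: subsetT.
Qed.

Lemma card_nbrs_range v : #|[set w | e2 (f v) w & w \in f @: setT]| = deg e1 v.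
Proof.
rewrite /deg -(card_imset _ f_inj); apply: eq_card => w.
rewrite !inE; apply/andP/imsetP => [[vw /imsetP [x _ wx]] | [x vx ->]].
  by exists x; rewrite // inE -f_induced -wx.
by rewrite inE -f_induced in vx; rewrite imset_f.
Qed.

Hypothesis f_onto : forall w, w \in f @: setT.

Lemma deg_induced_onto v : deg e2 (f v) = deg e1 v.
Proof.
rewrite -card_nbrs_range; apply: eq_card => w.
by rewrite !inE f_onto andbT.
Qed.

Lemma k3deg_induced_onto v : k3deg e2 (f v) = k3deg e1 v.
Proof.
rewrite -card_triangles_at_range k3degE; apply: eq_card => S.
by rewrite !inE (_ : S \subset f @: setT) ?andbT //; apply/subsetP => w _.
Qed.

End InducedEmbedding.

Definition cartesian_rel (T1 T2 : finType) (e1 : rel T1) (e2 : rel T2) : rel (T1 * T2) :=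
  fun x y => (e1 x.1 y.1 && (x.2 == y.2)) || ((x.1 == y.1) && e2 x.2 y.2).

Lemma mem_imset_pairl (T1 T2 : finType) (h : T2) (s : T1 * T2) :
  (s \in pair^~ h @: setT) = (s.2 == h).
Proof. by apply/imsetP/eqP => [[x _ ->] // | <-]; exists s.1; case: s. Qed.

Lemma mem_imset_pairr (T1 T2 : finType) (g : T1) (s : T1 * T2) :
  (s \in pair g @: setT) = (s.1 == g).
Proof. by apply/imsetP/eqP => [[y _ ->] // | <-]; exists s.2; case: s. Qed.

Section CartesianProduct.
Variables (T1 T2 : finType) (e1 : rel T1) (e2 : rel T2).
Hypotheses (simple1 : simple_graph e1) (simple2 : simple_graph e2).
Local Notation e := (cartesian_rel e1 e2).

Lemma cartesian_simple : simple_graph e.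
Proof.
have [sym1 irr1] := simple1; have [sym2 irr2] := simple2.
split=> [x y | x]; last by rewrite /cartesian_rel irr1 irr2 andbF.
by rewrite /cartesian_rel sym1 sym2 eq_sym (eq_sym x.1).
Qed.

Lemma cartesian_relE g h x y :
  e (g, h) (x, y) = (e1 g x && (y == h)) || ((x == g) && e2 h y).
Proof. by rewrite /cartesian_rel /= (eq_sym h) (eq_sym g). Qed.

Lemma deg_cartesian g h : deg e (g, h) = deg e1 g + deg e2 h.
Proof.
have nbrsE : [set w | e (g, h) w] =
    setX [set x | e1 g x] [set h] :|: setX [set g] [set y | e2 h y].
  by apply/setP => -[x y]; rewrite !inE cartesian_relE.
rewrite /deg nbrsE cardsU !cardsX !cards1 muln1 mul1n.
suff -> : setX [set x | e1 g x] [set h] :&: setX [set g] [set y | e2 h y] = set0.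
  by rewrite cards0 subn0.
apply/setP => -[x y]; rewrite !inE /=.
by have [-> | _] := eqVneq x g; rewrite ?(proj2 simple1) ?andbF.
Qed.

Lemma cartesian_rel_cross g h x y : e1 g x -> e2 h y -> e (x, h) (g, y) = false.
Proof.
move=> gx hy; rewrite /cartesian_rel /=.
have /negbTE -> : x != g by apply: contraTneq gx => ->; rewrite (proj2 simple1).
have /negbTE -> : h != y by apply: contraTneq hy => ->; rewrite (proj2 simple2).
by rewrite andbF.
Qed.

Lemma triangle_cartesian_slice g h S : S \in triangles_at e (g, h) ->
  (S \subset pair^~ h @: setT) || (S \subset pair g @: setT).
Proof.
rewrite inE => /and3P [/cards2P [a [b [ab ->]]] /subsetP nbrs /forall_inP adj].
have := implyP (forall_inP (adj a (set21 a b)) b (set22 a b)) ab.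
have := nbrs a (set21 a b); have := nbrs b (set22 a b).
rewrite !subUset !sub1set !mem_imset_pairl !mem_imset_pairr !inE.
case: a b {ab nbrs adj} => [x1 y1] [x2 y2] /=.
rewrite [e (g, h) (x2, _)]cartesian_relE [e (g, h) (x1, _)]cartesian_relE.
case/orP=> [/andP [gx2 /eqP ->] | /andP [/eqP -> hy2]];
  case/orP=> [/andP [gx1 /eqP ->] | /andP [/eqP -> hy1]]; rewrite ?eqxx ?orbT //.
- by rewrite (proj1 cartesian_simple) cartesian_rel_cross.
- by rewrite cartesian_rel_cross.
Qed.

Lemma triangle_cartesian_not_both_slices g h S : S \in triangles_at e (g, h) ->
  S \subset pair^~ h @: setT -> S \subset pair g @: setT -> False.
Proof.
rewrite inE => /and3P [/eqP S2 /subsetP nbrs _] /subsetP Sh /subsetP Sg.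
have /set0Pn [[x y] xyS] : S != set0 by rewrite -card_gt0 S2.
move: (nbrs _ xyS) (Sh _ xyS) (Sg _ xyS).
rewrite inE mem_imset_pairl mem_imset_pairr => + /eqP /= yh /eqP /= xg.
by rewrite yh xg (proj2 cartesian_simple).
Qed.

Lemma k3deg_cartesian g h : k3deg e (g, h) = k3deg e1 g + k3deg e2 h.
Proof.
have injl : injective (pair^~ h : T1 -> T1 * T2) by move=> x y [].
have injr : injective (pair g : T2 -> T1 * T2) by move=> x y [].
have inducedl x y : e (x, h) (y, h) = e1 x y.
  by rewrite /cartesian_rel /= eqxx andbT (proj2 simple2) andbF orbF.
have inducedr x y : e (g, x) (g, y) = e2 x y.
  by rewrite /cartesian_rel /= eqxx (proj2 simple1).
rewrite -(card_triangles_at_range injl inducedl) -(card_triangles_at_range injr inducedr).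
rewrite k3degE -cardsUI.
have -> : [set S in triangles_at e (g, h) | S \subset pair^~ h @: setT] :&:
          [set S in triangles_at e (g, h) | S \subset pair g @: setT] = set0.
  apply/setP => S; rewrite in_setI in_set0; apply/negbTE/negP.
  case/andP=> /setIdP [triS Sl] /setIdP [_ Sr].
  exact: triangle_cartesian_not_both_slices triS Sl Sr.
rewrite cards0 addn0 !setIdE -setIUr (setIidPl _) //.
by apply/subsetP => S triS; rewrite !inE; exact: triangle_cartesian_slice.
Qed.
End CartesianProduct.

Definition complete_rel (n : nat) : rel 'I_n := fun x y => x != y.

Lemma complete_simple n : simple_graph (@complete_rel n).
Proof. by split=> [x y | x]; rewrite /complete_rel ?eqxx // eq_sym. Qed.

Lemma complete_nbrs n (v : 'I_n) : [set w | complete_rel v w] = [set~ v].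
Proof. by apply/setP => w; rewrite !inE /complete_rel eq_sym. Qed.

Lemma deg_complete n (v : 'I_n) : deg (@complete_rel n) v = n.-1.
Proof. by rewrite /deg complete_nbrs cardsC1 card_ord. Qed.

Lemma k3deg_deg_lt2 (T : finType) (e : rel T) v : deg e v < 2 -> k3deg e v = 0.
Proof.
move=> deg_lt2; apply/eqP; rewrite k3degE cards_eq0; apply/eqP/setP => S.
rewrite !inE; apply/negP => /and3P [/eqP S2 /subset_leq_card + _].
by rewrite S2 leqNgt deg_lt2.
Qed.

Lemma k3deg_K3 (v : 'I_3) : k3deg (@complete_rel 3) v = 1.
Proof.
rewrite k3degE (_ : triangles_at _ v = [set [set~ v]]) ?cards1 //.
apply/setP => S; rewrite !inE complete_nbrs.
apply/and3P/eqP => [[/eqP S2 Sv _] | ->].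
  by apply/eqP; rewrite eqEcard Sv cardsC1 card_ord S2.
split=> //; first by rewrite cardsC1 card_ord.
by apply/forall_inP => u _; apply/forall_inP => w _; apply/implyP.
Qed.

Lemma exists_graphP r2 r3 :
  exists_graph r2 r3 <->
  exists (T : finType) (e : rel T), [/\ 0 < #|T|, simple_graph e & has_params e r2 r3].
Proof.
split=> [[n [e [n_gt0 [simple_e params_e]]]] | [T [e [T_gt0 [sym_e irr_e] params_e]]]].
  by exists 'I_n, e; rewrite card_ord.
pose f : 'I_#|T| -> T := enum_val.
have f_inj : injective f := enum_val_inj.
have f_onto w : w \in f @: setT by rewrite -(enum_rankK w) imset_f.
have f_induced i j : e (f i) (f j) = (fun i j => e (f i) (f j)) i j by [].
exists #|T|, (fun i j => e (f i) (f j)); split=> //; split.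
  by split=> [i j | i]; [exact: sym_e | exact: irr_e].
move=> i; have [deg_fi k3_fi] := params_e (f i).
by rewrite -(deg_induced_onto f_inj f_induced f_onto)
           -(k3deg_induced_onto f_inj f_induced f_onto).
Qed.

Lemma exists_graph_complete n r3 :
  0 < n -> (forall v, k3deg (@complete_rel n) v = r3) -> exists_graph n.-1 r3.
Proof.
move=> n_gt0 k3_n; exists n, (@complete_rel n); do !split => //.
- exact: (proj1 (complete_simple n)).
- exact: (proj2 (complete_simple n)).
- exact: deg_complete.
Qed.

Lemma exists_graph_add a b c d :
  exists_graph a b -> exists_graph c d -> exists_graph (a + c) (b + d).
Proof.
move=> /exists_graphP [T1 [e1 [T1_gt0 simple1 params1]]].
move=> /exists_graphP [T2 [e2 [T2_gt0 simple2 params2]]].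
apply/exists_graphP; exists (T1 * T2)%type, (cartesian_rel e1 e2); split.
- by rewrite card_prod muln_gt0 T1_gt0 T2_gt0.
- exact: cartesian_simple.
- move=> [g h]; have [deg1 k31] := params1 g; have [deg2 k32] := params2 h.
  by rewrite deg_cartesian // k3deg_cartesian // deg1 deg2 k31 k32.
Qed.

Lemma exists_graph_K1 : exists_graph 0 0.
Proof. by apply: (@exists_graph_complete 1) => // v; rewrite k3deg_deg_lt2 ?deg_complete. Qed.

Lemma exists_graph_K2 : exists_graph 1 0.
Proof. by apply: (@exists_graph_complete 2) => // v; rewrite k3deg_deg_lt2 ?deg_complete. Qed.

Lemma exists_graph_K3 : exists_graph 2 1.
Proof. exact: (@exists_graph_complete 3) k3deg_K3. Qed.

Lemma exists_graph_double r3 : exists_graph (2 * r3) r3.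
Proof.
elim: r3 => [|r3 IH]; first exact: exists_graph_K1.
by rewrite mulnS addnC -[r3.+1]addn1; apply: exists_graph_add IH exists_graph_K3.
Qed.

Lemma exists_graph_monotone r2 r2' r3 :
  r2 <= r2' -> exists_graph r2 r3 -> exists_graph r2' r3.
Proof.
move=> /subnKC <-; elim: (r2' - r2) => [|k IH] ex_r2; first by rewrite addn0.
by rewrite addnS -addn1 -[r3]addn0; apply: exists_graph_add (IH ex_r2) exists_graph_K2.
Qed.

Lemma ex_least_nat (P : nat -> Prop) n :
  P n -> exists m, P m /\ forall k, k < m -> ~ P k.
Proof.
move=> Pn; have [m [[Pm min_m] _]] :=
  dec_inh_nat_subset_has_unique_least_element P (fun k => classic (P k)) (ex_intro P n Pn).
by exists m; split=> // k lt_k_m /min_m /leP; rewrite leqNgt lt_k_m.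
Qed.

Theorem corollary4p3 (r3 : nat) :
  exists r2s : nat,
    (forall r2 : nat, r2s <= r2 -> exists_graph r2 r3) /\
    (forall r2 : nat, r2 < r2s -> ~ exists_graph r2 r3).
Proof.
have [r2s [ex_r2s min_r2s]] := ex_least_nat (P := exists_graph^~ r3) (exists_graph_double r3).
by exists r2s; split=> // r2 le_r2s_r2; exact: exists_graph_monotone le_r2s_r2 ex_r2s.
Qed.
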